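(* Let $k,l$ be positive integers, $f$ a $k$-variable Boolean function and $g$ a balanced $l$-variable Boolean function. For $0\le i\le k$ let $a_i=\max_{\mathbf{w}\in\mathbb{F}_2^k,\ \mathrm{wt}(\mathbf{w})=i} W_f^2(\mathbf{w})$. Then $$H_\infty(f\diamond g)=\min_{i\in\{0,\ldots,k\},\ a_i>0}\bigl(-\log a_i + i\cdot H_\infty(g)\bigr).$$
   Context: A Boolean function on $n$ variables is a map $\mathbb{F}_2^n\to\mathbb{F}_2$; it is balanced if it takes the value $1$ on exactly $2^{n-1}$ inputs. The Walsh transform is $W_f(\bm{\alpha})=2^{-n}\sum_{\mathbf{x}\in\mathbb{F}_2^n}(-1)^{f(\mathbf{x})\oplus\langle\mathbf{x},\bm{\alpha}\rangle}$ with $\langle\mathbf{x},\bm{\alpha}\rangle=\bigoplus_i x_i\alpha_i$. $\mathrm{wt}(\mathbf{w})$ is the Hamming weight. All logarithms are base 2. The Fourier min-entropy is $H_\infty(f)=\min_{\bm{\alpha}:W_f^2(\bm{\alpha})\ne0}\log(1/W_f^2(\bm{\alpha}))$. Disjoint composition: for $f$ on $k$ variables and $g$ on $l$ variables, $f\diamond g$ is the $kl$-variable function $(f\diamond g)(\mathbf{x})=f(g(\mathbf{x}^{(1)}),\ldots,g(\mathbf{x}^{(k)}))$, where $\mathbf{x}^{(i)}=(x_{(i-1)l+1},\ldots,x_{il})$. *)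

From HB Require Import structures.
From mathcomp Require Import all_boot all_order all_algebra.
From mathcomp Require Import all_classical all_reals all_analysis.
Set Implicit Arguments. Unset Strict Implicit. Unset Printing Implicit Defensive.
Import Order.TTheory GRing.Theory Num.Theory.
Local Open Scope ring_scope.

Definition bvec (n : nat) := {ffun 'I_n -> bool}.
Definition boolfun (n : nat) := bvec n -> bool.

Definition ip n (x a : bvec n) : bool := \big[addb/false]_(i < n) (x i && a i).

Definition wt n (w : bvec n) : nat := #|[set i | w i]|.

Definition balanced n (f : boolfun n) : Prop := #|[set x | f x]| = (2 ^ n.-1)%N.

Definition log2 (R : realType) (x : R) : R := ln x / ln 2.

Definition walsh (R : realType) n (f : boolfun n) (a : bvec n) : R :=
  (2 ^+ n)^-1 * \sum_(x : bvec n) (-1) ^+ (f x (+) ip x a).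

(* Fourier min-entropy: min over a with W_f(a)^2 <> 0 of log(1/W_f(a)^2),
   as an extended real (the index set is never empty, so the +oo default is never used). *)
Definition Hinf (R : realType) n (f : boolfun n) : \bar R :=
  \big[Order.min/+oo%E]_(a : bvec n | walsh R f a ^+ 2 != 0)
     (log2 (walsh R f a ^+ 2)^-1)%:E.

(* the index (i-1)*l + j (0-based: i*l + j) of the j-th variable of block i *)
Lemma blk_idx_lt k l (i : 'I_k) (j : 'I_l) : (i * l + j < k * l)%N.
Proof.
case: i j => i Hi [j Hj] /=.
apply: (@leq_trans ((i.+1) * l)); first by rewrite mulSn addnC ltn_add2r.
by rewrite leq_mul2r Hi orbT.
Qed.

Definition blk_idx k l (i : 'I_k) (j : 'I_l) : 'I_(k * l) := Ordinal (blk_idx_lt i j).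

Definition block k l (x : bvec (k * l)) (i : 'I_k) : bvec l :=
  [ffun j => x (blk_idx i j)].

Definition disjcomp k l (f : boolfun k) (g : boolfun l) : boolfun (k * l) :=
  fun x => f [ffun i => g (block x i)].

(* a_i = max_{wt w = i} W_f(w)^2 (all candidates are >= 0, so default 0 is harmless) *)
Definition amax (R : realType) k (f : boolfun k) (i : nat) : R :=
  \big[Num.max/0]_(w : bvec k | wt w == i) walsh R f w ^+ 2.

From HB Require Import structures.
From mathcomp Require Import all_boot all_order all_algebra.
From mathcomp Require Import all_classical all_reals all_analysis.
From mathcomp Require Import ring.
Import Order.TTheory GRing.Theory Num.Theory.
Local Open Scope ring_scope.
Set Implicit Arguments. Unset Strict Implicit. Unset Printing Implicit Defensive.

(* The heart of the proof is a product formula for the Walsh spectrum of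
   f <> g (walsh_disjcomp).  Cut a spectral point a of F_2^(kl) into its k
   blocks a^(i) of length l and let w(a) in F_2^k record which blocks are
   nonzero.  Then  W_{f<>g}(a) = W_f(w(a)) * prod_{i : a^(i) <> 0} W_g(a^(i)).
   It is obtained by reindexing the sum over x by its blocks, distributing
   the product of block characters over the values of g on the blocks, and
   evaluating the character sums over the fibres of g: for balanced g these
   are 2^(l-1) (-1)^b W_g(A) when A <> 0 and 2^(l-1) when A = 0.
   Taking logarithms (log_walsh_disjcomp), log(1/W_{f<>g}(a)^2) is
   -log W_f(w(a))^2 plus one term log(1/W_g(a^(i))^2) >= H(g) for each of the
   wt(w(a)) nonzero blocks.  The lower bound of the theorem follows by bounding
   W_f(w)^2 by a_{wt w} (Hinf_disjcomp_ge); the upper bound is attained by a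
   point a whose pattern w has weight i and W_f(w)^2 = a_i, and whose nonzero
   blocks all equal a spectral point of g realising H(g) (Hinf_disjcomp_le). *)

Definition z0 n : bvec n := [ffun _ => false].

Lemma ffun_neq_exists (I : finType) (T : eqType) (u v : {ffun I -> T}) :
  u != v -> exists i, u i != v i.
Proof.
move=> ne; apply/existsP; apply: contraNT ne => /existsPn H.
by apply/eqP/ffunP => i; move: (H i); rewrite negbK => /eqP.
Qed.

Section Blocks.
Variables k l : nat.

Lemma blk_num_lt (p : 'I_(k * l)) : (p %/ l < k)%N.
Proof.
case: p => p Hp /=; case: l Hp => [|l'] Hp; first by rewrite muln0 in Hp.
by rewrite ltn_divLR.
Qed.

Lemma blk_pos_lt (p : 'I_(k * l)) : (p %% l < l)%N.
Proof.
case: p => p Hp /=; case: l Hp => [|l'] Hp; first by rewrite muln0 in Hp.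
by rewrite ltn_pmod.
Qed.

Definition blk_num (p : 'I_(k * l)) : 'I_k := Ordinal (blk_num_lt p).
Definition blk_pos (p : 'I_(k * l)) : 'I_l := Ordinal (blk_pos_lt p).

Lemma blk_numK i j : blk_num (blk_idx i j) = i.
Proof.
apply: val_inj => /=; case: j => j Hj /=.
have l0 : (0 < l)%N by case: (l) Hj.
by rewrite divnMDl // divn_small // addn0.
Qed.

Lemma blk_posK i j : blk_pos (blk_idx i j) = j.
Proof. by apply: val_inj => /=; case: j => j Hj /=; rewrite modnMDl modn_small. Qed.

Lemma blk_idxK p : blk_idx (blk_num p) (blk_pos p) = p.
Proof. by apply: val_inj => /=; rewrite -divn_eq. Qed.

Lemma blk_idx_bij : bijective (fun q : 'I_k * 'I_l => blk_idx q.1 q.2).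
Proof.
exists (fun p => (blk_num p, blk_pos p)); first by case=> i j /=; rewrite blk_numK blk_posK.
by move=> p /=; rewrite blk_idxK.
Qed.

Definition unblocks (X : {ffun 'I_k -> bvec l}) : bvec (k * l) :=
  [ffun p => X (blk_num p) (blk_pos p)].

Lemma block_unblocks X i : block (unblocks X) i = X i.
Proof. by apply/ffunP => j; rewrite !ffunE blk_numK blk_posK. Qed.

Lemma unblocks_bij : bijective unblocks.
Proof.
exists (fun x => [ffun i => block x i]).
  by move=> X; apply/ffunP => i; rewrite ffunE block_unblocks.
by move=> x; apply/ffunP => p; rewrite !ffunE blk_idxK.
Qed.

End Blocks.

Section Characters.
Variable R : comPzRingType.

Lemma sign_xor (I : finType) (P : pred I) (b : I -> bool) :
  (-1) ^+ (\big[addb/false]_(i | P i) b i) = \prod_(i | P i) ((-1) ^+ b i : R).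
Proof.
apply: (big_morph (fun c : bool => (-1) ^+ c : R)) => //.
by move=> x y; rewrite signr_addb.
Qed.

Lemma sign_ip n (x a : bvec n) :
  (-1) ^+ (ip x a) = \prod_(p < n) ((-1) ^+ (x p && a p) : R).
Proof. by rewrite /ip sign_xor. Qed.

Lemma sign_ip_blocks k l (x a : bvec (k * l)) :
  (-1) ^+ (ip x a) = \prod_(i < k) ((-1) ^+ (ip (block x i) (block a i)) : R).
Proof.
rewrite sign_ip (reindex _ (onW_bij _ (@blk_idx_bij k l))) /=.
rewrite -(pair_big xpredT xpredT
  (fun i j => (-1) ^+ (x (blk_idx i j) && a (blk_idx i j)) : R)) /=.
by apply: eq_bigr => i _; rewrite sign_ip; apply: eq_bigr => j _; rewrite !ffunE.
Qed.

End Characters.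

Lemma ip_sym n (x a : bvec n) : ip x a = ip a x.
Proof. by apply: eq_bigr => p _; rewrite andbC. Qed.

Lemma ip_z0 n (x : bvec n) : ip x (z0 n) = false.
Proof. by rewrite /ip big1 // => p _; rewrite ffunE andbF. Qed.

Section WalshBasics.
Variable R : realType.

Lemma char_sum l (A : bvec l) :
  \sum_(z : bvec l) ((-1) ^+ ip z A : R) = if A == z0 l then 2 ^+ l else 0.
Proof.
under eq_bigr => z _ do rewrite sign_ip.
rewrite /bvec -(bigA_distr_bigA (fun p (b : bool) => (-1) ^+ (b && A p) : R)).
under eq_bigr => p _ do rewrite big_bool /=.
case: eqP => [-> | /eqP nz].
  under eq_bigr => p _ do rewrite ffunE /=.
  by rewrite prodr_const card_ord.
have [p Hp] := ffun_neq_exists nz; rewrite ffunE /= in Hp.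
have Ap : A p by move: Hp; case: (A p).
by apply/eqP/prodf_eq0; exists p => //; rewrite Ap expr1 addNr.
Qed.

(* The Walsh coefficients sum to (-1)^{g(0)}; in particular the spectrum is
   never identically zero, so the minimum defining Hinf is over a nonempty set. *)
Lemma walsh_sum l (g : boolfun l) :
  \sum_(b : bvec l) walsh R g b = (-1) ^+ g (z0 l).
Proof.
rewrite /walsh -mulr_sumr exchange_big /=.
under eq_bigr => z _ do under eq_bigr => b _ do rewrite signr_addb ip_sym.
under eq_bigr => z _ do rewrite -mulr_sumr char_sum.
rewrite (bigD1 (z0 l)) //= eqxx big1 ?addr0; first by rewrite mulrC mulfK // expf_neq0.
by move=> z /negbTE ->; rewrite mulr0.
Qed.

Lemma walsh_exists_nz l (g : boolfun l) : exists b, walsh R g b ^+ 2 != 0.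
Proof.
apply/existsP; apply: contraT => /existsPn H.
have : \sum_(b : bvec l) walsh R g b = 0.
  by apply: big1 => b _; move: (H b); rewrite negbK expf_eq0 /= => /eqP.
by rewrite walsh_sum => /eqP; rewrite signr_eq0.
Qed.

Lemma walsh_z0 l (g : boolfun l) : (0 < l)%N -> balanced g -> walsh R g (z0 l) = 0.
Proof.
move=> l0 bal; rewrite /walsh.
under eq_bigr => z _ do rewrite ip_z0 addbF.
have -> : \sum_(z : bvec l) ((-1) ^+ g z : R) = \sum_(z : bvec l) (1 - (g z)%:R *+ 2).
  by apply: eq_bigr => z _; case: (g z); rewrite ?expr0 ?expr1 /=; ring.
rewrite sumrB sumrMnl.
have -> : \sum_(z : bvec l) ((g z)%:R : R) = \sum_(z | g z) 1.
  by rewrite [RHS]big_mkcond; apply: eq_bigr => z _; case: (g z).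
rewrite !sumr_const -[#|[pred z | g z]|]cardsE bal card_ffun card_bool card_ord.
by case: l l0 {g bal} => // l _ /=; rewrite expnS natrM; ring.
Qed.

End WalshBasics.

Definition block_factor (R : realType) l (g : boolfun l) (A : bvec l) : R :=
  if A == z0 l then 1 else walsh R g A.

Definition nzblocks k l (a : bvec (k * l)) : bvec k := [ffun i => block a i != z0 l].

Lemma nzblocksE k l (a : bvec (k * l)) i : nzblocks a i = (block a i != z0 l).
Proof. by rewrite ffunE. Qed.

Section Composition.
Variable R : realType.

Lemma fibre_char_sum l (g : boolfun l) (A : bvec l) (b : bool) :
  (0 < l)%N -> balanced g ->
  \sum_(z : bvec l) (if g z == b then (-1) ^+ ip z A else 0 : R) =
  2 ^+ l.-1 * (-1) ^+ (b && (A != z0 l)) * block_factor R g A.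
Proof.
move=> l0 bal.
have halves : \sum_(z : bvec l) (if g z == b then (-1) ^+ ip z A else 0 : R) =
  2^-1 * (\sum_(z : bvec l) (-1) ^+ ip z A +
          (-1) ^+ b * \sum_(z : bvec l) ((-1) ^+ (g z (+) ip z A))).
  rewrite mulr_sumr -big_split mulr_sumr; apply: eq_bigr => z _.
  by rewrite signr_addb; case: (g z); case: b => /=; rewrite ?expr0 ?expr1; field.
have walshE : \sum_(z : bvec l) ((-1) ^+ (g z (+) ip z A) : R) = 2 ^+ l * walsh R g A.
  by rewrite /walsh mulrA mulfV ?mul1r // expf_neq0.
rewrite {}halves {}walshE char_sum /block_factor.
case: l l0 g A bal => // l _ g A bal /=.
case: eqP => [-> | _] /=.
  by rewrite walsh_z0 //; case: b; rewrite /= ?expr0 ?exprS; field.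
by case: b; rewrite /= ?expr0 ?expr1 exprS; field.
Qed.

Lemma sum_over_fibres k l (g : boolfun l) (phi : bvec k -> R)
    (e : 'I_k -> bvec l -> R) :
  \sum_(X : {ffun 'I_k -> bvec l}) phi [ffun i => g (X i)] * \prod_i e i (X i) =
  \sum_(y : bvec k) phi y * \prod_i \sum_(z : bvec l) (if g z == y i then e i z else 0).
Proof.
under [RHS]eq_bigr => y _ do rewrite bigA_distr_bigA mulr_sumr.
rewrite exchange_big /=; apply: eq_bigr => X _.
rewrite (bigD1 [ffun i => g (X i)]) //= [X in _ + X]big1 ?addr0.
  by congr (_ * _); apply: eq_bigr => i _; rewrite ffunE eqxx.
move=> y ne; have [i Hi] := ffun_neq_exists ne.
by rewrite ffunE in Hi; rewrite (bigD1 i) //= eq_sym (negbTE Hi) mul0r mulr0.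
Qed.

Lemma prod_fibre_sums k l (g : boolfun l) (a : bvec (k * l)) (y : bvec k) :
  (0 < l)%N -> balanced g ->
  \prod_i \sum_(z : bvec l) (if g z == y i then (-1) ^+ ip z (block a i) else 0 : R) =
  2 ^+ l.-1 ^+ k * \prod_i block_factor R g (block a i) * (-1) ^+ ip y (nzblocks a).
Proof.
move=> l0 bal; rewrite sign_ip.
under eq_bigr => i _ do rewrite fibre_char_sum // -nzblocksE.
by rewrite !big_split /= prodr_const card_ord; ring.
Qed.

Lemma walsh_disjcomp k l (f : boolfun k) (g : boolfun l) (a : bvec (k * l)) :
  (0 < l)%N -> balanced g ->
  walsh R (disjcomp f g) a =
  walsh R f (nzblocks a) * \prod_i block_factor R g (block a i).
Proof.
move=> l0 bal; rewrite /walsh.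
have blockwise (X : {ffun 'I_k -> bvec l}) :
    (-1) ^+ (disjcomp f g (unblocks X) (+) ip (unblocks X) a) =
    (-1) ^+ f [ffun i => g (X i)] * \prod_i ((-1) ^+ ip (X i) (block a i) : R).
  rewrite signr_addb sign_ip_blocks /disjcomp; congr (_ * _).
    by congr ((-1) ^+ f _); apply/ffunP => i; rewrite !ffunE block_unblocks.
  by apply: eq_bigr => i _; rewrite block_unblocks.
rewrite (reindex (@unblocks k l)) /=; last exact: onW_bij (unblocks_bij k l).
rewrite (eq_bigr _ (fun X _ => blockwise X)) {blockwise} (sum_over_fibres g (fun y => (-1) ^+ f y)
  (fun i z => (-1) ^+ ip z (block a i))).
rewrite (eq_bigr (fun y => 2 ^+ l.-1 ^+ k * \prod_i block_factor R g (block a i) *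
  (-1) ^+ (f y (+) ip y (nzblocks a)))); last first.
  by move=> y _; rewrite prod_fibre_sums // signr_addb; ring.
rewrite -mulr_sumr.
have pow2E : (2 : R) ^+ l.-1 ^+ k = 2 ^+ (k * l) / 2 ^+ k.
  case: l l0 {g a bal} => // l _ /=.
  by rewrite mulnS exprD -exprM mulnC [RHS]mulrC mulKf // expf_neq0.
by rewrite pow2E; field; rewrite !expf_neq0.
Qed.

End Composition.

Section Logarithms.
Variable R : realType.

Lemma log2M (x y : R) : 0 < x -> 0 < y -> log2 (x * y) = log2 x + log2 y.
Proof. by move=> hx hy; rewrite /log2 lnM ?posrE // mulrDl. Qed.

Lemma log2V (x : R) : 0 < x -> log2 x^-1 = - log2 x.
Proof. by move=> hx; rewrite /log2 lnV ?posrE // mulNr. Qed.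

Lemma log2_1 : log2 (1 : R) = 0.
Proof. by rewrite /log2 ln1 mul0r. Qed.

Lemma ler_log2 (x y : R) : 0 < x -> x <= y -> log2 x <= log2 y.
Proof.
move=> hx hxy; have hy : 0 < y by apply: lt_le_trans hxy.
rewrite /log2 ler_pM2r ?invr_gt0 ?ln_gt0 ?ltr1n //.
by rewrite ler_ln ?posrE.
Qed.

Lemma log2_prod (I : finType) (P : pred I) (F : I -> R) :
  (forall i, P i -> 0 < F i) ->
  log2 (\prod_(i | P i) F i) = \sum_(i | P i) log2 (F i).
Proof.
move=> Fpos.
suff [] : 0 < \prod_(i | P i) F i /\
          log2 (\prod_(i | P i) F i) = \sum_(i | P i) log2 (F i) by [].
elim/big_ind2: _ => [|p1 s1 p2 s2 [h1 e1] [h2 e2]|i Pi].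
- by rewrite log2_1.
- by split; [exact: mulr_gt0 | rewrite log2M // e1 e2].
- by split=> //; exact: Fpos.
Qed.

Lemma sqr_gt0 (x : R) : x != 0 -> 0 < x ^+ 2.
Proof. by move=> nz; rewrite lt_def sqr_ge0 expf_neq0. Qed.

End Logarithms.

Section MinEntropy.
Variable R : realType.

Lemma Hinf_le n (f : boolfun n) b :
  walsh R f b ^+ 2 != 0 -> (Hinf R f <= (log2 (walsh R f b ^+ 2)^-1)%:E)%E.
Proof. by move=> nzb; rewrite /Hinf; apply: bigmin_le_cond. Qed.

(* ... and the coefficient of largest absolute value attains the bound. *)
Lemma Hinf_attained n (f : boolfun n) :
  exists2 b, walsh R f b ^+ 2 != 0 & Hinf R f = (log2 (walsh R f b ^+ 2)^-1)%:E.
Proof.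
have [b0 nz0] := walsh_exists_nz R f.
rewrite /Hinf (bigmin_eq_arg _ _ (fun b => walsh R f b ^+ 2 != 0) _ nz0) => [|b _];
  last exact: leey.
by case: arg_minP => // b nzb _; exists b.
Qed.

Lemma amax_attained k (f : boolfun k) i :
  0 < amax R f i -> exists2 w, wt w = i & amax R f i = walsh R f w ^+ 2.
Proof.
rewrite /amax; case: (pickP (fun w : bvec k => wt w == i)) => [w0 wt0 | no_weight_i].
  rewrite (bigmax_eq_arg _ _ (fun w => wt w == i) _ wt0) => [_|w _]; last exact: sqr_ge0.
  by case: arg_maxP => // w /eqP wtw _; exists w.
by rewrite big_pred0 // ltxx.
Qed.

Lemma sum_over_support k (w : bvec k) (x : R) :
  \sum_j (if w j then x else 0) = (wt w)%:R * x.
Proof. by rewrite -big_mkcond /= sumr_const /wt cardsE mulr_natl. Qed.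

Lemma log_walsh_disjcomp k l (f : boolfun k) (g : boolfun l) (a : bvec (k * l)) :
  (0 < l)%N -> balanced g -> walsh R (disjcomp f g) a ^+ 2 != 0 ->
  [/\ walsh R f (nzblocks a) != 0,
      (forall j, nzblocks a j -> walsh R g (block a j) != 0) &
      log2 (walsh R (disjcomp f g) a ^+ 2)^-1 =
      - log2 (walsh R f (nzblocks a) ^+ 2) +
      \sum_j (if nzblocks a j then log2 (walsh R g (block a j) ^+ 2)^-1 else 0)].
Proof.
move=> l0 bal; rewrite walsh_disjcomp // expf_eq0 /= mulf_eq0 negb_or.
move=> /andP[nz_f /prodf_neq0 nz_factors].
have nz_g j : nzblocks a j -> walsh R g (block a j) != 0.
  by rewrite nzblocksE => nz; have := nz_factors j isT; rewrite /block_factor (negbTE nz).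
split=> //.
have factor_pos j : 0 < block_factor R g (block a j) ^+ 2 by exact/sqr_gt0/nz_factors.
rewrite exprMn -prodrXl log2V; last by rewrite mulr_gt0 ?sqr_gt0 ?prodr_gt0.
rewrite log2M ?sqr_gt0 ?prodr_gt0 // log2_prod // opprD -sumrN.
congr (_ + _); apply: eq_bigr => j _.
case: (boolP (nzblocks a j)) => [nzj | ]; last first.
  by rewrite nzblocksE negbK /block_factor => ->; rewrite expr1n log2_1 oppr0.
by rewrite /block_factor -[_ == _]negbK -nzblocksE nzj /= log2V ?opprK // sqr_gt0 // nz_g.
Qed.

Definition spread k l (w : bvec k) (beta : bvec l) : bvec (k * l) :=
  unblocks [ffun j => if w j then beta else z0 l].

Lemma block_spread k l (w : bvec k) (beta : bvec l) j :
  block (spread w beta) j = if w j then beta else z0 l.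
Proof. by rewrite block_unblocks ffunE. Qed.

Lemma nzblocks_spread k l (w : bvec k) (beta : bvec l) :
  beta != z0 l -> nzblocks (spread w beta) = w.
Proof.
by move=> nzb; apply/ffunP => j; rewrite nzblocksE block_spread; case: (w j); rewrite ?eqxx.
Qed.

Lemma Hinf_disjcomp_ge k l (f : boolfun k) (g : boolfun l) (hg : R) :
  (0 < l)%N -> balanced g ->
  (forall b, walsh R g b ^+ 2 != 0 -> hg <= log2 (walsh R g b ^+ 2)^-1) ->
  (\big[Order.min/+oo%E]_(i < k.+1 | (0 < amax R f i)%R)
     ((- log2 (amax R f i))%:E + (i%:R)%:E * hg%:E) <= Hinf R (disjcomp f g))%E.
Proof.
move=> l0 bal hg_min; apply: le_bigmin => [|a nz_a]; first exact: leey.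
have [nz_f nz_g ->] := log_walsh_disjcomp l0 bal nz_a.
have wt_lt : (wt (nzblocks a) < k.+1)%N.
  by rewrite ltnS /wt; apply: leq_trans (max_card _) _; rewrite card_ord.
have le_amax : walsh R f (nzblocks a) ^+ 2 <= amax R f (Ordinal wt_lt).
  exact: (@le_bigmax_cond _ _ _ 0 _ (fun w => wt w == _) (fun w => walsh R f w ^+ 2) (eqxx _)).
have amax_pos : 0 < amax R f (Ordinal wt_lt) by apply: lt_le_trans le_amax; exact: sqr_gt0.
apply: le_trans (@bigmin_le_cond _ _ _ +oo%E _ (fun i : 'I_k.+1 => 0 < amax R f i) _ amax_pos) _.
rewrite -EFinM -EFinD lee_fin lerD //; first by rewrite lerN2 ler_log2 ?sqr_gt0.
rewrite /= -sum_over_support; apply: ler_sum => j _.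
by case: ifP => // nzj; apply: hg_min; rewrite expf_neq0 // nz_g.
Qed.

(* Upper bound: for each i with a_i > 0, spreading a nonzero spectral point
   beta of g over a pattern w of weight i realising a_i gives a point of
   entropy -log a_i + i log(1/W_g(beta)^2). *)
Lemma Hinf_disjcomp_le k l (f : boolfun k) (g : boolfun l) (beta : bvec l) :
  (0 < l)%N -> balanced g -> walsh R g beta ^+ 2 != 0 ->
  (Hinf R (disjcomp f g) <= \big[Order.min/+oo%E]_(i < k.+1 | (0 < amax R f i)%R)
     ((- log2 (amax R f i))%:E + (i%:R)%:E * (log2 (walsh R g beta ^+ 2)^-1)%:E))%E.
Proof.
move=> l0 bal nz_beta; apply: le_bigmin => [|i amax_pos]; first exact: leey.
have [w wt_w amax_w] := amax_attained amax_pos.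
have nzW_beta : walsh R g beta != 0 by apply: contraNneq nz_beta => ->; rewrite expr0n.
have beta_nz : beta != z0 l by apply: contraNneq nzW_beta => ->; rewrite walsh_z0.
have nz_a : walsh R (disjcomp f g) (spread w beta) ^+ 2 != 0.
  rewrite walsh_disjcomp // nzblocks_spread // expf_neq0 // mulf_neq0 //.
    by apply: contraTneq amax_pos => fw0; rewrite amax_w fw0 expr0n ltxx.
  apply/prodf_neq0 => j _; rewrite /block_factor block_spread.
  by case: (w j); rewrite ?(negbTE beta_nz) ?eqxx ?oner_neq0.
apply: le_trans (Hinf_le nz_a) _.
rewrite -EFinM -EFinD lee_fin; have [_ _ ->] := log_walsh_disjcomp l0 bal nz_a.
rewrite nzblocks_spread // amax_w.
rewrite (eq_bigr (fun j => if w j then log2 (walsh R g beta ^+ 2)^-1 else 0)).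
  by rewrite sum_over_support wt_w.
by move=> j _; rewrite block_spread; case: (w j).
Qed.

End MinEntropy.

Unset Implicit Arguments.

(* H(f <> g) = min_{i : a_i > 0} (-log a_i + i H(g)). *)
Theorem theorem4 (R : realType) (k l : nat) (f : boolfun k) (g : boolfun l) :
  (0 < k)%N -> (0 < l)%N -> balanced g ->
  Hinf R (disjcomp f g) =
  \big[Order.min/+oo%E]_(i < k.+1 | 0 < amax R f i)
     ((- log2 (amax R f i))%:E + (i%:R)%:E * Hinf R g)%E.
Proof.
move=> _ l0 bal.
have [beta nz_beta Hg] := Hinf_attained R g.
apply/eqP; rewrite eq_le Hg Hinf_disjcomp_le //=.
apply: Hinf_disjcomp_ge => // b nz_b.
by rewrite -lee_fin -Hg; exact: Hinf_le.
Qed.
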